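(* Let $d$ be odd and let $a,b,c\geq 1$ be integers with $2a+2b+2c=d+1$. For each $j=1,2,\ldots,b$, the couple $(D(a,b,c),(2j+1,0))$ is not realizable: there is no monic real polynomial of degree $d$ with all coefficients non-zero, defining the sign pattern $D(a,b,c)$, having exactly $2j+1$ positive simple roots and no other real roots.
   Context: A monic polynomial $x^d+\sum_{j<d}a_jx^j$ with all $a_j\neq0$ defines the sign pattern $(+,\operatorname{sign}(a_{d-1}),\ldots,\operatorname{sign}(a_0))$. $D(a,b,c)$ denotes the sign pattern of length $d+1$ (listed from the coefficient of $x^d$ down to the constant term) consisting of $2a$ pluses, followed by $b$ pairs ''$-,+$'', followed by $2c$ minuses. A monic polynomial realizes $(\sigma,(pos,neg))$ if it has all coefficients non-zero, defines $\sigma$, has exactly $pos$ positive and $neg$ negative real roots, all simple, and no other real roots. *)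

From mathcomp Require Import all_boot all_order all_algebra.
From mathcomp Require Import reals.
Set Implicit Arguments. Unset Strict Implicit. Unset Printing Implicit Defensive.
Import Order.TTheory GRing.Theory Num.Theory.
Local Open Scope ring_scope.

(* A sign pattern is a list of booleans: true = '+', false = '-',
   listed from the coefficient of x^d down to the constant term. *)
Definition sign_pattern := seq bool.

Definition Dpat (a b c : nat) : sign_pattern :=
  nseq (2 * a) true ++ flatten (nseq b [:: false; true]) ++ nseq (2 * c) false.

Definition defines_pattern (R : realType) (p : {poly R}) (sigma : sign_pattern) :=
  size p = size sigma /\
  forall i : nat, (i < size sigma)%N ->
    p`_(size sigma - 1 - i) != 0 /\ (0 < p`_(size sigma - 1 - i)) = nth true sigma i.

Definition realizes (R : realType) (p : {poly R}) (sigma : sign_pattern)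
  (pos neg : nat) :=
  p \is monic /\ defines_pattern p sigma /\
  (exists sp : seq R, [/\ uniq sp, size sp = pos, all (fun x => (0 < x) && root p x) sp &
      forall x : R, 0 < x -> root p x -> x \in sp]) /\
  (exists sn : seq R, [/\ uniq sn, size sn = neg, all (fun x => (x < 0) && root p x) sn &
      forall x : R, x < 0 -> root p x -> x \in sn]) /\
  (forall x : R, root p x -> ~~ root p^`() x) /\
  ~~ root p 0.

From mathcomp Require Import all_boot all_order all_algebra.
From mathcomp Require Import reals.
From mathcomp Require Import zify ring lra.
Set Implicit Arguments. Unset Strict Implicit. Unset Printing Implicit Defensive.
Import Order.TTheory GRing.Theory Num.Theory.
Local Open Scope ring_scope.

(* Write p(x) = E(x) + O(x) with E, O the even- and odd-degree parts of p, so
   that p(-x) = E(x) - O(x).  For the pattern D(a,b,c) the coefficients of E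
   are negative below degree 2c and positive from there on, while those of O
   are negative below degree 2b+2c and positive from there on.  A polynomial q
   whose coefficients change sign once, at degree t, satisfies
   s^t q(r) <= r^t q(s) for 0 < r <= s ("x^-t q(x) is nondecreasing").
   If p has no negative root, then p < 0 on the negative reals (its constant
   term is negative), so at a positive root r we get E(r) < 0 < O(r) = -E(r).
   Comparing two positive roots r < s through the two monotonicity
   inequalities (at the thresholds 2c < 2b+2c) yields (s/r)^(2b) <= 1, which
   is absurd.  Hence such a p has at most one positive root, while
   realizability would require 2j+1 >= 3 of them. *)

Definition even_part (R : nzRingType) (p : {poly R}) : {poly R} :=
  \poly_(i < size p) (if odd i then 0 else p`_i).

Definition odd_part (R : nzRingType) (p : {poly R}) : {poly R} :=
  \poly_(i < size p) (if odd i then p`_i else 0).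

Lemma horner_even_odd (R : comNzRingType) (p : {poly R}) (x : R) :
  p.[x] = (even_part p).[x] + (odd_part p).[x].
Proof.
rewrite horner_coef !horner_poly -big_split /=; apply: eq_bigr => i _.
by case: (odd i); rewrite mul0r ?add0r ?addr0.
Qed.

Lemma horner_even_odd_opp (R : comNzRingType) (p : {poly R}) (x : R) :
  p.[- x] = (even_part p).[x] - (odd_part p).[x].
Proof.
rewrite horner_coef !horner_poly -sumrB; apply: eq_bigr => i _.
by rewrite exprNn -signr_odd; case: (odd i) => /=; ring.
Qed.

Definition single_sign_change (R : numDomainType) (q : {poly R}) (t : nat) :=
  forall i, ((i < t)%N -> q`_i <= 0) /\ ((t <= i)%N -> 0 <= q`_i).

Lemma monomial_ratio_le (R : realFieldType) (f r s : R) (i t : nat) :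
  0 < r -> r <= s -> ((i < t)%N -> f <= 0) -> ((t <= i)%N -> 0 <= f) ->
  s ^+ t * (f * r ^+ i) <= r ^+ t * (f * s ^+ i).
Proof.
move=> r0 rs fneg fpos.
have s0 : 0 < s by apply: lt_le_trans rs.
have pow_prod_pos (k : nat) : 0 < r ^+ k * s ^+ k by rewrite mulr_gt0 // exprn_gt0.
case: (leqP t i) => ti.
- have [k ->] : exists k, i = (t + k)%N by exists (i - t)%N; lia.
  rewrite !exprD.
  have -> : s ^+ t * (f * (r ^+ t * r ^+ k)) = (f * (r ^+ t * s ^+ t)) * r ^+ k by ring.
  have -> : r ^+ t * (f * (s ^+ t * s ^+ k)) = (f * (r ^+ t * s ^+ t)) * s ^+ k by ring.
  by rewrite ler_wpM2l ?pmulr_lge0 ?fpos // lerXn2r // nnegrE ltW.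
- have [k ->] : exists k, t = (i + k)%N by exists (t - i)%N; lia.
  rewrite !exprD.
  have -> : s ^+ i * s ^+ k * (f * r ^+ i) = (f * (r ^+ i * s ^+ i)) * s ^+ k by ring.
  have -> : r ^+ i * r ^+ k * (f * s ^+ i) = (f * (r ^+ i * s ^+ i)) * r ^+ k by ring.
  by rewrite ler_wnM2l ?pmulr_lle0 ?fneg // lerXn2r // nnegrE ltW.
Qed.

Lemma horner_single_sign_change (R : realFieldType) (q : {poly R}) (t : nat) (r s : R) :
  single_sign_change q t -> 0 < r -> r <= s ->
  s ^+ t * q.[r] <= r ^+ t * q.[s].
Proof.
move=> qt r0 rs; rewrite !horner_coef !mulr_sumr; apply: ler_sum => i _.
by have [qneg qpos] := qt i; apply: monomial_ratio_le.
Qed.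

Lemma power_ratio_contra (R : realFieldType) (r s u v : R) (m n : nat) :
  0 < r -> r < s -> 0 < u -> (m < n)%N ->
  r ^+ m * v <= s ^+ m * u -> s ^+ n * u <= r ^+ n * v -> False.
Proof.
move=> r0 rs u0 lt_mn hm hn; have s0 : 0 < s by apply: lt_trans rs.
have [k def_n] : exists k, n = (m + k.+1)%N by exists (n - m)%N.-1; lia.
rewrite {}def_n {lt_mn} in hn.
have rm0 : 0 < r ^+ m by apply: exprn_gt0.
have sm0 : 0 < s ^+ m by apply: exprn_gt0.
have rk_lt_sk : r ^+ k.+1 < s ^+ k.+1 by rewrite ltrXn2r ?ltW.
have : (s ^+ m * u) * (r ^+ m * s ^+ k.+1) <= (s ^+ m * u) * (r ^+ m * r ^+ k.+1).
  have -> : (s ^+ m * u) * (r ^+ m * s ^+ k.+1) = r ^+ m * (s ^+ (m + k.+1) * u).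
    by rewrite exprD; ring.
  have -> : (s ^+ m * u) * (r ^+ m * r ^+ k.+1) = r ^+ (m + k.+1) * (s ^+ m * u).
    by rewrite exprD; ring.
  apply: le_trans (ler_wpM2l (ltW rm0) hn) _.
  have -> : r ^+ m * (r ^+ (m + k.+1) * v) = r ^+ (m + k.+1) * (r ^+ m * v) by ring.
  by apply: ler_wpM2l; rewrite // exprn_ge0 // ltW.
rewrite ler_pM2l ?mulr_gt0 // ler_pM2l //.
by rewrite leNgt rk_lt_sk.
Qed.

Lemma neg_on_negatives (R : rcfType) (p : {poly R}) :
  p.[0] < 0 -> (forall x, x < 0 -> ~~ root p x) -> forall x, x < 0 -> p.[x] < 0.
Proof.
move=> p0_neg no_neg_root x x_neg; rewrite ltNge; apply/negP => px_ge0.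
have sign_change : (- p).[x] <= 0 <= (- p).[0].
  by rewrite !hornerN oppr_le0 px_ge0 oppr_ge0 ltW.
have [y /andP [_ y_le0]] := poly_ivt (ltW x_neg) sign_change.
rewrite rootN => py0.
have y_neg : y < 0 by rewrite lt_neqAle y_le0 andbT; apply: contraTneq py0 => ->; rewrite /root lt_eqF.
by move: (no_neg_root y y_neg); rewrite py0.
Qed.

Lemma no_two_positive_roots (R : realFieldType) (p : {poly R}) (te to : nat) :
  (te < to)%N -> single_sign_change (even_part p) te ->
  single_sign_change (odd_part p) to -> (forall x, x < 0 -> p.[x] < 0) ->
  forall r s, 0 < r -> r < s -> root p r -> root p s -> False.
Proof.
move=> lt_eo even_sc odd_sc p_neg r s r0 rs.
rewrite /root (horner_even_odd p r) (horner_even_odd p s) => /eqP pr /eqP ps.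
have even_mono := horner_single_sign_change even_sc r0 (ltW rs).
have odd_mono := horner_single_sign_change odd_sc r0 (ltW rs).
have pr_neg := p_neg (- r); rewrite horner_even_odd_opp oppr_lt0 in pr_neg.
have {pr_neg} er_lt_or := pr_neg r0.
set er := (even_part p).[r] in even_mono er_lt_or pr *.
set es := (even_part p).[s] in even_mono ps *.
set or := (odd_part p).[r] in odd_mono er_lt_or pr *.
set os := (odd_part p).[s] in odd_mono ps *.
have er_eq : er = - or by lra.
have es_eq : es = - os by lra.
rewrite er_eq es_eq !mulrN lerN2 in even_mono.
by apply: (power_ratio_contra r0 rs _ lt_eo even_mono odd_mono); lra.
Qed.

Lemma size_alternating (b : nat) : size (flatten (nseq b [:: false; true])) = (2 * b)%N.
Proof. by elim: b => [|b IH] //=; rewrite IH; lia. Qed.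

Lemma nth_alternating (b m : nat) : (m < 2 * b)%N ->
  nth true (flatten (nseq b [:: false; true])) m = odd m.
Proof.
elim: b m => [|b IH] m hm; first by lia.
case: m hm => [|[|m]] hm //=.
by rewrite IH ?negbK //; lia.
Qed.

Lemma size_Dpat (a b c : nat) : size (Dpat a b c) = (2 * a + 2 * b + 2 * c)%N.
Proof. by rewrite /Dpat !size_cat !size_nseq size_alternating; lia. Qed.

Lemma nth_Dpat (a b c k : nat) : (k < 2 * a + 2 * b + 2 * c)%N ->
  nth true (Dpat a b c) k = (k < 2 * a)%N || ((k < 2 * a + 2 * b)%N && odd k).
Proof.
move=> hk; rewrite /Dpat nth_cat size_nseq.
case: (ltnP k (2 * a)) => h1; first by rewrite nth_nseq h1.
rewrite nth_cat size_alternating /=.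
case: (ltnP (k - 2 * a) (2 * b)) => h2.
- rewrite nth_alternating // oddB // oddM /= addbF.
  by have -> : (k < 2 * a + 2 * b)%N by lia.
- rewrite nth_nseq.
  have -> : (k - 2 * a - 2 * b < 2 * c)%N by lia.
  by have -> : (k < 2 * a + 2 * b)%N = false by lia.
Qed.

Lemma Dpat_coef_sign (R : realType) (p : {poly R}) (a b c i : nat) :
  defines_pattern p (Dpat a b c) -> (i < 2 * a + 2 * b + 2 * c)%N ->
  p`_i != 0 /\ (0 < p`_i) = (2 * b + 2 * c <= i)%N || ((2 * c <= i)%N && ~~ odd i).
Proof.
rewrite /defines_pattern size_Dpat => -[_ pat] hi.
set n := (2 * a + 2 * b + 2 * c)%N in pat hi *.
have [nz pos] := pat (n - 1 - i)%N ltac:(lia).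
have idx : (n - 1 - (n - 1 - i) = i)%N by lia.
rewrite idx in nz pos; split => //; rewrite pos nth_Dpat; last by lia.
have -> : (n - 1 - i < 2 * a)%N = (2 * b + 2 * c <= i)%N by lia.
have -> : (n - 1 - i < 2 * a + 2 * b)%N = (2 * c <= i)%N by lia.
have -> // : odd (n - 1 - i) = ~~ odd i.
have sum_odd : ((n - 1 - i) + i = (2 * (a + b + c - 1)).+1)%N by lia.
by have := congr1 odd sum_odd; rewrite oddD /= oddM /=; case: (odd i); case: (odd _).
Qed.

Lemma Dpat_sign_changes (R : realType) (p : {poly R}) (a b c : nat) :
  defines_pattern p (Dpat a b c) ->
  single_sign_change (even_part p) (2 * c) /\
  single_sign_change (odd_part p) (2 * b + 2 * c).
Proof.
move=> pat; have [size_p _] := pat; rewrite size_Dpat in size_p.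
split=> i; rewrite coef_poly size_p.
all: case: (ltnP i (2 * a + 2 * b + 2 * c)) => [hi|_]; last by rewrite lexx.
all: have [_ pos] := Dpat_coef_sign pat hi.
all: case: ifP => oi; rewrite ?lexx //.
all: split => ht; [rewrite leNgt | apply: ltW]; rewrite pos oi /=; lia.
Qed.

Lemma Dpat_constant_neg (R : realType) (p : {poly R}) (a b c : nat) :
  (1 <= c)%N -> defines_pattern p (Dpat a b c) -> p.[0] < 0.
Proof.
move=> hc pat; rewrite horner_coef0.
have size_pos : (0 < 2 * a + 2 * b + 2 * c)%N by lia.
have [nz pos] := Dpat_coef_sign pat size_pos.
by rewrite lt_neqAle nz leNgt pos /=; lia.
Qed.

Lemma two_ordered_members (R : realDomainType) (s : seq R) :
  uniq s -> (1 < size s)%N -> exists x y, [/\ x < y, x \in s & y \in s].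
Proof.
case: s => [|x [|y s]] //= /andP [x_notin _] _.
have x_neq_y : x != y by apply: contraNneq x_notin => ->; rewrite mem_head.
case: (ltgtP x y) x_neq_y => [xy _ | yx _ | _ //].
- by exists x, y; rewrite !inE !eqxx orbT.
- by exists y, x; rewrite !inE !eqxx orbT.
Qed.

Theorem theorem6 (R : realType) (d a b c : nat) :
  odd d -> (1 <= a)%N -> (1 <= b)%N -> (1 <= c)%N ->
  (2 * a + 2 * b + 2 * c = d + 1)%N ->
  forall j : nat, (1 <= j <= b)%N ->
  ~ exists p : {poly R}, size p = d.+1 /\ realizes p (Dpat a b c) (2 * j + 1) 0.
Proof.
move=> _ _ hb hc _ j /andP [hj _] [p [_ [_ [pat [[sp [sp_uniq sp_size sp_pos _]]
  [[sn [_ sn_size _ sn_all]] _]]]]]].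
have [even_sc odd_sc] := Dpat_sign_changes pat.
have no_neg_root x : x < 0 -> ~~ root p x.
  by move=> x_neg; apply/negP => px; have := sn_all x x_neg px; rewrite (size0nil sn_size).
have p_neg := neg_on_negatives (Dpat_constant_neg hc pat) no_neg_root.
have two_roots : (1 < size sp)%N by rewrite sp_size; lia.
have [r [s [rs r_in s_in]]] := two_ordered_members sp_uniq two_roots.
move: sp_pos => /allP sp_pos.
have /andP [r0 pr] := sp_pos r r_in; have /andP [_ ps] := sp_pos s s_in.
have lt_eo : (2 * c < 2 * b + 2 * c)%N by lia.
exact: (no_two_positive_roots lt_eo even_sc odd_sc p_neg r0 rs pr ps).
Qed.
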